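(* For the binary tree-shifts $X_{15}=(C,D)$ and $X_{17}=(C,F)$, the limit $h_{PS}$ exists, $h_{PS}(X_{15})=h_{PS}(X_{17})$, and $$\tfrac14\log2\le h_{PS}(X_{15})\le\tfrac18\log7.$$
   Context: Binary tree-shifts: $k=2$, directions $a_1,a_2$, alphabet $\{0,1\}$; $(P,Q)$ is the set of trees $t:\{a_1,a_2\}^*\to\{0,1\}$ with $P_{t_x,t_{xa_1}}=1$, $Q_{t_x,t_{xa_2}}=1$ for all nodes $x$. Matrices: $C=\begin{pmatrix}0&1\\1&0\end{pmatrix}$, $D=\begin{pmatrix}1&1\\1&0\end{pmatrix}$, $F=\begin{pmatrix}0&1\\1&1\end{pmatrix}$. $p(n)$ is the number of allowed blocks of length $n$ (labellings $t|_{\Delta_n}$, $\Delta_n$ the words of length $\le n$), and $h_{PS}=\lim_{n\to\infty}\frac{\log p(n)}{1+2+\cdots+2^n}$. *)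

From mathcomp Require Import all_boot all_order all_algebra.
From mathcomp Require Import all_classical all_reals all_analysis.
Set Implicit Arguments. Unset Strict Implicit. Unset Printing Implicit Defensive.
Import Order.TTheory GRing.Theory Num.Theory.

(* Directions a_1, a_2 are encoded as (0 : 'I_2), (1 : 'I_2); nodes are
   words in seq 'I_2; the node x a_i is [rcons x a_i].  Alphabet {0,1} = 'I_2. *)
Definition node := seq 'I_2.
Definition tree := node -> 'I_2.

Definition a1 : 'I_2 := ord0.
Definition a2 : 'I_2 := ord_max.

Definition mx_of (rows : seq (seq nat)) : 'M[nat]_2 :=
  \matrix_(i < 2, j < 2) nth 0%N (nth [::] rows i) j.

Definition C : 'M[nat]_2 := mx_of [:: [:: 0; 1]; [:: 1; 0]]%N.
Definition D : 'M[nat]_2 := mx_of [:: [:: 1; 1]; [:: 1; 0]]%N.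
Definition F : 'M[nat]_2 := mx_of [:: [:: 0; 1]; [:: 1; 1]]%N.

Definition in_shift (P Q : 'M[nat]_2) (t : tree) : Prop :=
  forall x : node, P (t x) (t (rcons x a1)) = 1%N /\ Q (t x) (t (rcons x a2)) = 1%N.

Fixpoint words (k : nat) : seq node :=
  if k is k'.+1 then [seq rcons w a | w <- words k', a <- [:: a1; a2]]
  else [:: [::]].
Definition Delta (n : nat) : seq node := flatten [seq words k | k <- iota 0 n.+1].

(* a block on Delta_n, encoded as the list of its labels along Delta n *)
Definition block (n : nat) := (size (Delta n)).-tuple 'I_2.

Definition p (P Q : 'M[nat]_2) (n : nat) : nat :=
  #|[set b : block n |
      `[< exists t : tree, in_shift P Q t /\ val b = map t (Delta n) >]]|.

Definition hseq {R : realType} (P Q : 'M[nat]_2) (n : nat) : R :=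
  ln ((p P Q n)%:R) / ((\sum_(i < n.+1) 2 ^ i)%N)%:R.

From mathcomp Require Import all_boot all_order all_algebra.
From mathcomp Require Import all_classical all_reals all_analysis.
From mathcomp Require Import ring lra zify.
Import Order.TTheory GRing.Theory Num.Theory numFieldNormedType.Exports.
Set Implicit Arguments. Unset Strict Implicit. Unset Printing Implicit Defensive.

(* A block on Delta_(n+1) is a root label together with two blocks on Delta_n
   whose root labels are compatible with it, and since no row of C, D, F
   vanishes, every locally allowed block extends to a tree of the shift. Hence
   the numbers (x_n, y_n) of allowed blocks of (C,D) with root 0 and 1 satisfy
   x_(n+1) = y_n (x_n + y_n), y_(n+1) = x_n^2, while (C,F) gives the same
   recursion with the two labels exchanged, so both shifts have the same p(n).
   Then p(n+1) = x^2 + xy + y^2 lies between 3/4 p(n)^2 and p(n)^2, so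
   log p(n) / 2^(n+1) is nonincreasing and bounded below by log 2 / 4; its limit
   is h_PS, and it is at most the value log 7 / 8 taken at n = 2. *)

Lemma ord2E (c : 'I_2) : c = a1 \/ c = a2.
Proof. by case: c => [[|[|//]] ?]; [left|right]; apply: val_inj. Qed.

Lemma mem_words k x : (x \in words k) = (size x == k).
Proof.
elim: k x => [|k IHk] x; first by case: x.
case/lastP: x => [|y c].
  by apply/negbTE/negP => /allpairsP [[w a] /= [_ _]]; case: w.
rewrite size_rcons eqSS -IHk; apply/allpairsP/idP.
  by case=> -[w a] /= [Hw _ /rcons_inj [-> _]].
by move=> Hy; exists (y, c); split => //=; case: (ord2E c) => ->; rewrite !inE eqxx ?orbT.
Qed.

Lemma uniq_words k : uniq (words k).
Proof.
elim: k => [|k IHk] //; rewrite allpairs_uniq //.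
by move=> [w a] [w' a'] _ _ /= /rcons_inj [-> ->].
Qed.

Lemma DeltaS n : Delta n.+1 = Delta n ++ words n.+1.
Proof. by rewrite /Delta -addn1 iotaD map_cat flatten_cat /= cats0. Qed.

Lemma mem_Delta n x : (x \in Delta n) = (size x <= n).
Proof.
elim: n => [|n IHn]; first by rewrite /Delta /= inE leqn0 size_eq0.
by rewrite DeltaS mem_cat IHn mem_words [RHS]leq_eqVlt ltnS orbC.
Qed.

Lemma uniq_Delta n : uniq (Delta n).
Proof.
elim: n => [|n IHn] //; rewrite DeltaS cat_uniq IHn uniq_words andbT.
by apply/hasPn => x; rewrite mem_words mem_Delta => /eqP ->; rewrite ltnn.
Qed.

(* Off Delta n the label is the junk value a1. *)
Definition label n (b : block n) (x : node) : 'I_2 := nth a1 b (index x (Delta n)).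

Definition block_of n (f : node -> 'I_2) : block n :=
  Tuple (introT eqP (size_map f (Delta n))).

Lemma label_block_of n f x : x \in Delta n -> label (block_of n f) x = f x.
Proof. by move=> Hx; rewrite /label (nth_map [::]) ?index_mem // nth_index. Qed.

Lemma block_ofK n (b : block n) : block_of n (label b) = b.
Proof.
apply: val_inj; apply: (@eq_from_nth _ a1) => [|i]; first by rewrite size_map size_tuple.
by rewrite size_map => Hi; rewrite (nth_map [::]) // /label index_uniq ?uniq_Delta.
Qed.

Lemma eq_block n (b b' : block n) : {in Delta n, label b =1 label b'} -> b = b'.
Proof.
by move=> Hbb'; rewrite -(block_ofK b) -(block_ofK b'); apply/val_inj/eq_in_map.
Qed.

Section LocallyAllowed.
Variables P Q : 'M[nat]_2.

Definition allowed_at (f : node -> 'I_2) (x : node) :=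
  (P (f x) (f (rcons x a1)) == 1%N) && (Q (f x) (f (rcons x a2)) == 1%N).

Definition allowed_block n (b : block n) :=
  all (fun x => (size x < n) ==> allowed_at (label b) x) (Delta n).

Lemma allowed_blockP n (b : block n) :
  reflect (forall x, size x < n -> allowed_at (label b) x) (allowed_block b).
Proof.
apply: (iffP allP) => Hb x; last by move=> _; apply/implyP/Hb.
by move=> Hx; apply: (implyP (Hb x _)); rewrite // mem_Delta ltnW.
Qed.

Lemma allowed_block_of_shift n (t : tree) :
  in_shift P Q t -> allowed_block (block_of n t).
Proof.
move=> Ht; apply/allowed_blockP => x Hx.
rewrite /allowed_at !label_block_of ?mem_Delta ?size_rcons ?(ltnW Hx) //.
by case: (Ht x) => -> ->.
Qed.

Definition no_zero_row (M : 'M[nat]_2) := forall s, exists s', M s s' == 1%N.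

Hypotheses (P_rows : no_zero_row P) (Q_rows : no_zero_row Q).

Lemma allowed_block_extends n (b : block n) :
  allowed_block b -> exists t : tree, in_shift P Q t /\ val b = map t (Delta n).
Proof.
move/allowed_blockP => Hb.
pose sP s := xchoose (P_rows s); pose sQ s := xchoose (Q_rows s).
(* Below depth n each label is chosen from its parent's; nodes are read
   reversed so that the parent is a structural subterm. *)
pose fix g (r : seq 'I_2) : 'I_2 :=
  if r is a :: r' then
    if size r' < n then label b (rev r) else if a == a1 then sP (g r') else sQ (g r')
  else label b [::].
have g_label r : size r <= n -> g r = label b (rev r) by case: r => [|a r] //= ->.
exists (fun x => g (rev x)); split.
  move=> x; rewrite !rev_rcons /= size_rev; case: ltnP => [Hx|_].
    rewrite g_label ?size_rev ?(ltnW Hx) // !rev_cons !revK.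
    by case/andP: (Hb x Hx) => /eqP -> /eqP ->.
  by split; apply/eqP; [exact: (xchooseP (P_rows _)) | exact: (xchooseP (Q_rows _))].
rewrite -[in LHS](block_ofK b); apply/eq_in_map => x; rewrite mem_Delta => Hx.
by rewrite g_label ?size_rev // revK.
Qed.

Lemma p_allowed_block n : p P Q n = #|[set b : block n | allowed_block b]|.
Proof.
apply: eq_card => b; rewrite !inE; apply/asboolP/idP => [[t [Ht Hbt]]|].
  by rewrite (_ : b = block_of n t) ?allowed_block_of_shift //; apply: val_inj.
exact: allowed_block_extends.
Qed.

End LocallyAllowed.

Definition graft n (s : 'I_2) (bl br : block n) : block n.+1 :=
  block_of n.+1 (fun x => if x is a :: y then if a == a1 then label bl y else label br y
                          else s).

Definition subblock n (a : 'I_2) (b : block n.+1) : block n :=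
  block_of n (fun y => label b (a :: y)).

Lemma label_graft_nil n s (bl br : block n) : label (graft s bl br) [::] = s.
Proof. by rewrite label_block_of // mem_Delta. Qed.

Lemma label_graft_cons n s (bl br : block n) a y : size y <= n ->
  label (graft s bl br) (a :: y) = if a == a1 then label bl y else label br y.
Proof. by move=> Hy; rewrite label_block_of // mem_Delta. Qed.

Lemma eq_a2a1 : (a2 == a1) = false. Proof. by []. Qed.

Lemma graftK n (b : block n.+1) :
  graft (label b [::]) (subblock a1 b) (subblock a2 b) = b.
Proof.
apply: eq_block => -[|a y]; first by rewrite label_graft_nil.
rewrite mem_Delta /= ltnS => Hy; rewrite label_graft_cons //.
by case: (ord2E a) => ->; rewrite ?eq_a2a1 label_block_of ?mem_Delta.
Qed.

Lemma graft_subblock n s (bl br : block n) :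
  subblock a1 (graft s bl br) = bl /\ subblock a2 (graft s bl br) = br.
Proof.
by split; apply: eq_block => y; rewrite mem_Delta => Hy;
  rewrite label_block_of ?mem_Delta // label_graft_cons ?eq_a2a1.
Qed.

Lemma graft_inj n s : injective (fun bb : block n * block n => graft s bb.1 bb.2).
Proof.
move=> [bl br] [bl' br'] /= E.
by move: (graft_subblock s bl br) (graft_subblock s bl' br'); rewrite E => -[-> ->] [-> ->].
Qed.

Section RootCounts.
Variables P Q : 'M[nat]_2.

Lemma allowed_graft n s (bl br : block n) :
  allowed_block P Q (graft s bl br) =
  [&& P s (label bl [::]) == 1%N, Q s (label br [::]) == 1%N,
      allowed_block P Q bl & allowed_block P Q br].
Proof.
apply/allowed_blockP/and4P => [Hg|[HP HQ /allowed_blockP Hl /allowed_blockP Hr] [|a y]].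
- have /andP[] := Hg [::] isT; rewrite /allowed_at /= label_graft_nil.
  rewrite !label_graft_cons // => -> ->; split=> //; apply/allowed_blockP => y Hy.
    have := Hg (a1 :: y) Hy.
    by rewrite /allowed_at rcons_cons !label_graft_cons ?size_rcons // ltnW.
  have := Hg (a2 :: y) Hy.
  by rewrite /allowed_at rcons_cons !label_graft_cons ?size_rcons // ltnW.
- by rewrite /allowed_at /= label_graft_nil !label_graft_cons // HP HQ.
- rewrite ltnS => Hy.
  rewrite /allowed_at !rcons_cons !label_graft_cons ?size_rcons ?(ltnW Hy) //.
  by case: (ord2E a) => ->; [exact: Hl | exact: Hr].
Qed.

Definition nblocks n (s : 'I_2) :=
  #|[set b : block n | allowed_block P Q b && (label b [::] == s)]|.

Lemma card_by_root n (A : pred (block n)) :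
  #|[set b | A b]| = \sum_(s < 2) #|[set b | A b && (label b [::] == s)]|.
Proof.
rewrite -sum1_card (partition_big (fun b => label b [::]) predT) //=.
by apply: eq_bigr => s _; rewrite -sum1_card; apply: eq_bigl => b; rewrite !inE.
Qed.

Lemma sum_ord2 (G : 'I_2 -> nat) : \sum_(i < 2) G i = (G a1 + G a2)%N.
Proof. by rewrite big_ord_recr big_ord1; congr (G _ + G _)%N; apply: val_inj. Qed.

Lemma card_compatible_root n s (M : 'M[nat]_2) :
  #|[set b : block n | allowed_block P Q b && (M s (label b [::]) == 1%N)]| =
  (\sum_(s' < 2) (M s s' == 1%N) * nblocks n s')%N.
Proof.
rewrite card_by_root; apply: eq_bigr => s' _.
have [Hss'|Hss'] := boolP (M s s' == 1%N); rewrite ?mul1n ?mul0n.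
  by apply: eq_card => b; rewrite !inE; case: (label b [::] =P s') => [->|];
    rewrite ?Hss' ?andbT ?andbF.
apply/eqP; rewrite cards_eq0; apply/eqP/setP => b; rewrite !inE.
by case: (label b [::] =P s') => [->|]; rewrite ?(negbTE Hss') ?andbF.
Qed.

Lemma nblocks0 s : nblocks 0 s = 1%N.
Proof.
rewrite /nblocks -[RHS](cards1 (block_of 0 (fun=> s))); apply: eq_card => b; rewrite !inE.
apply/idP/eqP => [/andP[_ /eqP Hs]|->]; last by rewrite label_block_of ?eqxx ?andbT.
by apply: eq_block => x; rewrite mem_Delta leqn0 size_eq0 => /eqP ->; rewrite Hs label_block_of.
Qed.

Lemma nblocksS n s :
  nblocks n.+1 s = ((\sum_(s1 < 2) (P s s1 == 1%N) * nblocks n s1) *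
                  (\sum_(s2 < 2) (Q s s2 == 1%N) * nblocks n s2))%N.
Proof.
rewrite -!card_compatible_root -cardsX /nblocks -(card_imset _ (@graft_inj n s)).
apply: eq_card => b; rewrite inE; apply/andP/imsetP => [[Hb /eqP Hs]|].
  exists (subblock a1 b, subblock a2 b); last by rewrite /= -Hs graftK.
  by move: Hb; rewrite !inE -{1}(graftK b) allowed_graft Hs => /and4P [-> -> -> ->].
case=> -[bl br]; rewrite !inE /= => /andP [/andP [Hl HP] /andP [Hr HQ]] ->.
by rewrite allowed_graft label_graft_nil HP HQ Hl Hr eqxx.
Qed.

Lemma p_nblocks n :
  no_zero_row P -> no_zero_row Q -> p P Q n = (nblocks n a1 + nblocks n a2)%N.
Proof. by move=> rP rQ; rewrite (p_allowed_block rP rQ) card_by_root sum_ord2. Qed.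

End RootCounts.

(* With b_n = 3 a_n / 4 the hypothesis reads b_(n+1) >= b_n^2, and b_0^2 = 9/4 > 2. *)
Lemma pow2_le_sq (a : nat -> nat) :
  a 0 = 2%N -> (forall n, 3 * a n ^ 2 <= 4 * a n.+1)%N ->
  forall n, (2 ^ (2 ^ n) <= a n ^ 2)%N.
Proof.
move=> a0 a_ge n; suff: (16 * 2 ^ (2 ^ n) <= 9 * a n ^ 2)%N by lia.
elim: n => [|n IHn]; first by rewrite a0.
rewrite expnS mul2n -addnn expnD; move: (2 ^ (2 ^ n))%N IHn (a_ge n) => X.
move: (a n) (a n.+1) => u v; rewrite !expnS !expn0 !muln1 => IHn Huv.
have := leq_mul IHn IHn; have := leq_mul Huv Huv; nia.
Qed.

Lemma sum_pow2 n : ((\sum_(i < n.+1) 2 ^ i).+1 = 2 ^ n.+1)%N.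
Proof.
elim: n => [|n IHn]; first by rewrite big_ord1.
by rewrite big_ord_recr /= -addSn IHn [in RHS]expnS mul2n addnn.
Qed.

Local Open Scope ring_scope.
Local Open Scope classical_set_scope.

Lemma ler_ln_nat (R : realType) (m n : nat) :
  (0 < m)%N -> (m <= n)%N -> ln m%:R <= ln n%:R :> R.
Proof.
by move=> m_gt0 mn; rewrite ler_ln ?ler_nat ?posrE ?ltr0n // (leq_trans m_gt0).
Qed.

Lemma ln_natX (R : realType) (m k : nat) :
  (0 < m)%N -> ln (m ^ k)%:R = ln m%:R *+ k :> R.
Proof. by move=> m_gt0; rewrite natrX lnXn ?ltr0n. Qed.

Section LogGrowthRate.
Variables (R : realType) (a : nat -> nat).
Hypothesis a_gt0 : forall n, (0 < a n)%N.
Hypothesis a_sq : forall n, (a n.+1 <= a n ^ 2)%N.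

Definition ln_rate n : R := ln (a n)%:R / (2 ^ n.+1)%N%:R.

Lemma ln_rate_ge0 n : 0 <= ln_rate n.
Proof. by rewrite divr_ge0 // ln_ge0 // ler1n. Qed.

Lemma ln_rate_noninc : nonincreasing_seq ln_rate.
Proof.
apply/nonincreasing_seqP => n; rewrite /ln_rate [(2 ^ n.+2)%N]expnS natrM.
rewrite invfM mulrA ler_wpM2r ?invr_ge0 ?ler0n // ler_pdivrMr ?ltr0n //.
by rewrite mulr_natr -ln_natX // ler_ln_nat.
Qed.

Lemma cvgn_ln_rate : cvgn ln_rate.
Proof.
apply: nonincreasing_is_cvgn; first exact: ln_rate_noninc.
by exists 0 => _ [n _ <-]; exact: ln_rate_ge0.
Qed.

Lemma ln_rate_ge n : (2 ^ (2 ^ n) <= a n ^ 2)%N -> ln 2 / 4 <= ln_rate n.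
Proof.
move=> a_lb; rewrite /ln_rate expnSr natrM ler_pdivlMr ?mulr_gt0 ?ltr0n ?expn_gt0 //.
rewrite (_ : _ * _ * _ = ln 2 *+ 2 ^ n / 2); last by rewrite -mulr_natr; field.
by rewrite ler_pdivrMr // mulr_natr -!ln_natX // ler_ln_nat ?expn_gt0.
Qed.

Lemma cvg_ln_div_sum_pow2 :
  (fun n => ln (a n)%:R / (\sum_(i < n.+1) 2 ^ i)%N%:R) @ \oo --> limn ln_rate.
Proof.
pose S n : R := (\sum_(i < n.+1) 2 ^ i)%N%:R.
have S_gt0 n : 0 < S n by rewrite ltr0n big_ord_recl expn0.
have -> : (fun n => ln (a n)%:R / S n) = ln_rate + ln_rate \* (fun n => (S n)^-1).
  apply/funext => n; rewrite fctE /ln_rate /= -sum_pow2 -addn1 natrD -/(S n).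
  have Sn := S_gt0 n; field; apply/andP; split; rewrite gt_eqF //; lra.
rewrite -[X in _ --> X]addr0 -[X in limn ln_rate + X](mulr0 (limn ln_rate)).
apply: cvgD; first exact: cvgn_ln_rate.
apply: cvgM; first exact: cvgn_ln_rate.
apply: (@squeeze_cvgr _ _ _ _ (fun=> 0) harmonic); [|exact: cvg_cst|exact: cvg_harmonic].
near=> n; rewrite invr_ge0 ltW ?S_gt0 //= lef_pV2 ?posrE ?S_gt0 ?ltr0n //.
rewrite ler_nat -[X in (X <= _)%N]card_ord -sum1_card.
by apply: leq_sum => i _; rewrite expn_gt0.
Unshelve. all: by end_near.
Qed.

End LogGrowthRate.

Lemma C_entries : [/\ C a1 a1 = 0, C a1 a2 = 1, C a2 a1 = 1 & C a2 a2 = 0]%N.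
Proof. by rewrite /C /mx_of !mxE. Qed.

Lemma D_entries : [/\ D a1 a1 = 1, D a1 a2 = 1, D a2 a1 = 1 & D a2 a2 = 0]%N.
Proof. by rewrite /D /mx_of !mxE. Qed.

Lemma F_entries : [/\ F a1 a1 = 0, F a1 a2 = 1, F a2 a1 = 1 & F a2 a2 = 1]%N.
Proof. by rewrite /F /mx_of !mxE. Qed.

Lemma no_zero_row_C : no_zero_row C.
Proof.
by case: C_entries => _ h h' _ s; case: (ord2E s) => ->; [exists a2|exists a1]; apply/eqP.
Qed.

Lemma no_zero_row_D : no_zero_row D.
Proof. by case: D_entries => h _ h' _ s; case: (ord2E s) => ->; exists a1; apply/eqP. Qed.

Lemma no_zero_row_F : no_zero_row F.
Proof.
by case: F_entries => _ h h' _ s; case: (ord2E s) => ->; [exists a2|exists a1]; apply/eqP.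
Qed.

Lemma nblocksS_CD n :
  nblocks C D n.+1 a1 = (nblocks C D n a2 * (nblocks C D n a1 + nblocks C D n a2))%N /\
  nblocks C D n.+1 a2 = (nblocks C D n a1 * nblocks C D n a1)%N.
Proof.
rewrite !nblocksS !sum_ord2; case: C_entries => -> -> -> ->; case: D_entries => -> -> -> ->.
by rewrite /= !mul0n !mul1n ?add0n ?addn0.
Qed.

Lemma nblocksS_CF n :
  nblocks C F n.+1 a1 = (nblocks C F n a2 * nblocks C F n a2)%N /\
  nblocks C F n.+1 a2 = (nblocks C F n a1 * (nblocks C F n a1 + nblocks C F n a2))%N.
Proof.
rewrite !nblocksS !sum_ord2; case: C_entries => -> -> -> ->; case: F_entries => -> -> -> ->.
by rewrite /= !mul0n !mul1n ?add0n ?addn0.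
Qed.

Lemma nblocks_CF_CD n :
  nblocks C F n a1 = nblocks C D n a2 /\ nblocks C F n a2 = nblocks C D n a1.
Proof.
elim: n => [|n [IH1 IH2]]; first by rewrite !nblocks0.
by case: (nblocksS_CF n) (nblocksS_CD n) => -> -> [-> ->]; rewrite IH1 IH2 addnC.
Qed.

Lemma p_CD n : p C D n = (nblocks C D n a1 + nblocks C D n a2)%N.
Proof. exact: p_nblocks no_zero_row_C no_zero_row_D. Qed.

Lemma p_CF n : p C F n = p C D n.
Proof.
rewrite p_CD (p_nblocks _ no_zero_row_C no_zero_row_F).
by case: (nblocks_CF_CD n) => -> ->; rewrite addnC.
Qed.

Lemma p_CD0 : p C D 0 = 2%N.
Proof. by rewrite p_CD !nblocks0. Qed.

Lemma p_CD2 : p C D 2 = 7%N.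
Proof.
rewrite p_CD; case: (nblocksS_CD 1) => -> ->; case: (nblocksS_CD 0) => -> ->.
by rewrite !nblocks0.
Qed.

(* p(n+1) = x^2 + xy + y^2 where p(n) = x + y. *)
Lemma p_CDS_bounds n : (3 * p C D n ^ 2 <= 4 * p C D n.+1 <= 4 * p C D n ^ 2)%N.
Proof.
rewrite !p_CD; case: (nblocksS_CD n) => -> ->.
move: (nblocks C D n a1) (nblocks C D n a2) => x y.
have := (nat_AGM2 x y).1; rewrite !expnS expn0 !muln1 => AGM.
apply/andP; split; nia.
Qed.

Lemma p_CDS_le n : (p C D n.+1 <= p C D n ^ 2)%N.
Proof. by have /andP[_] := p_CDS_bounds n; rewrite leq_pmul2l. Qed.

Lemma p_CD_pow2 n : (2 ^ (2 ^ n) <= p C D n ^ 2)%N.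
Proof. by apply: pow2_le_sq n => [|k]; [exact: p_CD0 | case/andP: (p_CDS_bounds k)]. Qed.

Lemma p_CD_gt0 n : (0 < p C D n)%N.
Proof. by have := p_CD_pow2 n; case: (p C D n) => //; rewrite exp0n // leqn0 expn_eq0. Qed.

Theorem mainTheorem17 (R : realType) :
  exists h15 h17 : R,
    (@hseq R C D @ \oo --> h15) /\
    (@hseq R C F @ \oo --> h17) /\
    h15 = h17 /\
    ln 2 / 4 <= h15 <= ln 7 / 8.
Proof.
pose h := limn (ln_rate R (p C D)).
have cvg_rate : cvgn (ln_rate R (p C D)) := cvgn_ln_rate p_CD_gt0 p_CDS_le.
have cvg_CD : @hseq R C D @ \oo --> h := cvg_ln_div_sum_pow2 p_CD_gt0 p_CDS_le.
have hseq_CF : @hseq R C F = @hseq R C D by apply/funext => n; rewrite /hseq p_CF.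
exists h, h; rewrite hseq_CF; do 3!split => //; apply/andP; split.
- apply: limr_ge => //; apply: nearW => n.
  exact: (ln_rate_ge R p_CD_gt0 (p_CD_pow2 n)).
- have := nonincreasing_cvgn_ge (@ln_rate_noninc R _ p_CD_gt0 p_CDS_le) cvg_rate 2.
  by rewrite /ln_rate p_CD2.
Qed.
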